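(* Let $\alpha_1,\nu_1,\alpha_2,\nu_2,\omega_1,\omega_2,\xi_1,\xi_2$ be positive real numbers. Define, for $h\ge 0$, $$\widetilde{\varphi}_{\mathcal{CM}}(h)=\omega_1\,\frac{\gamma\big(\nu_1/2,(h^2+\alpha_1)\xi_1\big)}{\Gamma(\nu_1/2)}\,\varphi_{\mathcal{C}}(h;\alpha_1,\nu_1)+\omega_2\left[\varphi_{\mathcal{M}}(h;\alpha_2,\nu_2)-\frac{1}{\Gamma(\nu_2)}\,\Gamma\!\left(\nu_2;\frac{1}{4\xi_2\alpha_2^2};\frac{h^2}{4\alpha_2^2}\right)\right].$$ Then $\widetilde{\varphi}_{\mathcal{CM}}$ is positive definite in $\mathbb{R}^d$ for every $d\in\mathbb{N}$, i.e. for every $d,k\in\mathbb{N}$, all $a_1,\dots,a_k\in\mathbb{R}$ and all $\mathbf{s}_1,\dots,\mathbf{s}_k\in\mathbb{R}^d$, $\sum_{i,j=1}^k a_ia_j\,\widetilde{\varphi}_{\mathcal{CM}}(\|\mathbf{s}_i-\mathbf{s}_j\|)\ge 0$.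
   Context: $\Gamma$ denotes the gamma function. The lower incomplete gamma function is $\gamma(a,x)=\int_0^x t^{a-1}e^{-t}\,dt$ for $a>0,x\ge0$. The generalized incomplete gamma function is $\Gamma(a;b;c)=\int_b^\infty t^{a-1}\exp(-t-c\,t^{-1})\,dt$ for $a>0$, $b>0$, $c\ge 0$. The Matérn function is $\varphi_{\mathcal{M}}(h;\alpha,\nu)=\frac{2^{1-\nu}}{\Gamma(\nu)}(h/\alpha)^\nu K_\nu(h/\alpha)$ for $h>0$, with $\varphi_{\mathcal{M}}(0;\alpha,\nu)=1$ (continuous extension), where $K_\nu$ is the modified Bessel function of the second kind and $\alpha,\nu>0$. The Cauchy function is $\varphi_{\mathcal{C}}(h;\alpha,\nu)=(1+h^2/\alpha)^{-\nu/2}$, $h\ge0$, $\alpha,\nu>0$. *)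

From Stdlib Require Import Reals.
From Coquelicot Require Import Coquelicot.
Open Scope R_scope.

Definition ch (t : R) : R := (exp t + exp (- t)) / 2.

Definition Gamma_fun (a : R) : R :=
  RInt_gen (fun t => Rpower t (a - 1) * exp (- t)) (at_right 0) (Rbar_locally p_infty).

Definition lower_gamma (a x : R) : R :=
  RInt_gen (fun t => Rpower t (a - 1) * exp (- t)) (at_right 0) (at_point x).

Definition gen_inc_gamma (a b c : R) : R :=
  RInt_gen (fun t => Rpower t (a - 1) * exp (- t - c / t)) (at_point b) (Rbar_locally p_infty).

(* modified Bessel function of the second kind, for x > 0:
   K_nu(x) = int_0^oo exp(-x cosh t) cosh(nu t) dt  (DLMF 10.32.9) *)
Definition BesselK (nu x : R) : R :=
  RInt_gen (fun t => exp (- x * ch t) * ch (nu * t)) (at_point 0) (Rbar_locally p_infty).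

(* Matern function, with continuous extension 1 at h = 0 *)
Definition matern (h alpha nu : R) : R :=
  if Req_EM_T h 0 then 1
  else Rpower 2 (1 - nu) / Gamma_fun nu * Rpower (h / alpha) nu * BesselK nu (h / alpha).

Definition cauchy (h alpha nu : R) : R := Rpower (1 + h ^ 2 / alpha) (- nu / 2).

Definition phiCM (a1 n1 a2 n2 w1 w2 x1 x2 : R) (h : R) : R :=
  w1 * (lower_gamma (n1 / 2) ((h ^ 2 + a1) * x1) / Gamma_fun (n1 / 2)) * cauchy h a1 n1
  + w2 * (matern h a2 n2
          - / Gamma_fun n2 * gen_inc_gamma n2 (/ (4 * x2 * a2 ^ 2)) (h ^ 2 / (4 * a2 ^ 2))).

Fixpoint fsum (n : nat) (f : nat -> R) : R :=
  match n with O => 0 | S m => fsum m f + f m end.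

Definition eucl_dist (d : nat) (x y : nat -> R) : R :=
  sqrt (fsum d (fun l => (x l - y l) ^ 2)).

From Pilot Require Import Defs.
From Stdlib Require Import Reals Lra.
From Coquelicot Require Import Coquelicot.
Open Scope R_scope.

(* Both summands are scale mixtures of Gaussians [h => exp (- g x * h^2)] with nonnegative
   weights over an interval [(0, b]], and a Gaussian is positive definite in every dimension.
   For the Cauchy part, substituting [s = (h^2 + alpha_1) t] in the lower incomplete gamma
   function gives
     [gamma(nu_1/2, (h^2 + alpha_1) xi_1) phi_C(h)
        = alpha_1^(nu_1/2) int_0^xi_1 t^(nu_1/2 - 1) e^(-alpha_1 t) e^(-h^2 t) dt].
   For the Matern part, the integral representation of [K_nu] gives
     [Gamma(nu_2) phi_M(h) = int_0^oo s^(nu_2 - 1) e^(-s - h^2 / (4 alpha_2^2 s)) ds],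
   and subtracting the generalized incomplete gamma function leaves the same integral over
   [(0, 1 / (4 xi_2 alpha_2^2)]]. *)

Lemma fsum_ext n f g : (forall i, f i = g i) -> fsum n f = fsum n g.
Proof. intros H; induction n; simpl; [lra | rewrite IHn, H; lra]. Qed.

Lemma fsum_plus n f g : fsum n (fun i => f i + g i) = fsum n f + fsum n g.
Proof. induction n; simpl; [lra | rewrite IHn; lra]. Qed.

Lemma fsum_scal n c f : fsum n (fun i => c * f i) = c * fsum n f.
Proof. induction n; simpl; [lra | rewrite IHn; lra]. Qed.

Lemma fsum_nonneg n f : (forall i, 0 <= f i) -> 0 <= fsum n f.
Proof. intros H; induction n; simpl; [lra | specialize (H n); lra]. Qed.

Lemma is_lim_seq_fsum k (u : nat -> nat -> R) (l : nat -> R) :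
  (forall i, is_lim_seq (fun N => u N i) (l i)) ->
  is_lim_seq (fun N => fsum k (u N)) (fsum k l).
Proof.
  intros H; induction k; simpl.
  - apply is_lim_seq_const.
  - apply (is_lim_seq_plus' _ _ _ _ IHk (H k)).
Qed.

Lemma eucl_dist_sqr d x y : eucl_dist d x y ^ 2 = fsum d (fun l => (x l - y l) ^ 2).
Proof.
  unfold eucl_dist. rewrite <- Rsqr_pow2. apply Rsqr_sqrt.
  apply fsum_nonneg. intros; apply pow2_ge_0.
Qed.

(** * Positive semidefinite kernels *)

Definition psd_kernel (k : nat) (K : nat -> nat -> R) :=
  forall b : nat -> R, 0 <= fsum k (fun i => fsum k (fun j => b i * b j * K i j)).

Lemma psd_kernel_ext k K K' :
  (forall i j, K i j = K' i j) -> psd_kernel k K -> psd_kernel k K'.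
Proof.
  intros E H b. erewrite fsum_ext; [apply (H b) |].
  intros i; apply fsum_ext; intros j. now rewrite E.
Qed.

Lemma psd_kernel_1 k : psd_kernel k (fun _ _ => 1).
Proof.
  intros b.
  assert (E : fsum k (fun i => fsum k (fun j => b i * b j * 1)) = fsum k b * fsum k b).
  { rewrite <- fsum_scal. apply fsum_ext; intros i.
    rewrite Rmult_comm, <- fsum_scal. apply fsum_ext; intros; ring. }
  rewrite E. apply Rle_0_sqr.
Qed.

Lemma psd_kernel_congr k K u :
  psd_kernel k K -> psd_kernel k (fun i j => u i * u j * K i j).
Proof.
  intros H b. erewrite fsum_ext; [exact (H (fun i => b i * u i)) |].
  intros i; apply fsum_ext; intros; ring.
Qed.

Lemma is_lim_seq_exp_partial_sum z :
  is_lim_seq (fun N => sum_n (fun n => / INR (Factorial.fact n) * z ^ n) N) (exp z).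
Proof.
  eapply is_lim_seq_ext; [| exact (is_exp_Reals z)].
  intros N; apply sum_n_ext; intros n.
  rewrite pow_n_pow. apply Rmult_comm.
Qed.

Lemma sum_n_nonneg (g : nat -> R) N : (forall n, 0 <= g n) -> 0 <= sum_n g N.
Proof.
  intros H; induction N.
  - now rewrite sum_O.
  - rewrite sum_Sn. specialize (H (S N)). change (0 <= sum_n g N + g (S N)). lra.
Qed.

(* Expanding exp (c x_i x_j) in its power series writes the new quadratic form as a
   nonnegative combination of quadratic forms of K, with weights b_i x_i^n. *)
Lemma psd_kernel_mul_exp k K x c : 0 <= c -> psd_kernel k K ->
  psd_kernel k (fun i j => K i j * exp (c * x i * x j)).
Proof.
  intros Hc HK b.
  set (Q := fun n => fsum k (fun i => fsum k (fun j => (b i * x i ^ n) * (b j * x j ^ n) * K i j))).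
  set (u := fun N => sum_n (fun n => / INR (Factorial.fact n) * c ^ n * Q n) N).
  assert (Hlim : is_lim_seq u
    (fsum k (fun i => fsum k (fun j => b i * b j * (K i j * exp (c * x i * x j)))))).
  { eapply is_lim_seq_ext.
    2:{ apply is_lim_seq_fsum; intros i; apply is_lim_seq_fsum; intros j.
        replace (Finite _) with (Rbar_mult (b i * b j * K i j) (exp (c * x i * x j)))
          by (simpl; f_equal; ring).
        apply is_lim_seq_scal_l, is_lim_seq_exp_partial_sum. }
    intros N; unfold u; induction N.
    - rewrite sum_O; unfold Q. rewrite <- fsum_scal. apply fsum_ext; intros i.
      rewrite <- fsum_scal. apply fsum_ext; intros j. rewrite sum_O. simpl; field.
    - rewrite sum_Sn, <- IHN. change (plus ?p ?q) with (p + q).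
      unfold Q. rewrite <- fsum_scal, <- fsum_plus. apply fsum_ext; intros i.
      rewrite <- fsum_scal, <- fsum_plus. apply fsum_ext; intros j.
      rewrite sum_Sn. change (plus ?p ?q) with (p + q).
      rewrite !Rpow_mult_distr. ring. }
  refine (is_lim_seq_le (fun _ => 0) u 0 _ _ (is_lim_seq_const 0) Hlim).
  intros N; apply sum_n_nonneg; intros n.
  apply Rmult_le_pos; [| apply HK].
  apply Rmult_le_pos; [| now apply pow_le].
  apply Rlt_le, Rinv_0_lt_compat, lt_0_INR, Factorial.lt_O_fact.
Qed.

Lemma psd_kernel_mul_gauss k K x t : 0 <= t -> psd_kernel k K ->
  psd_kernel k (fun i j => K i j * exp (- t * (x i - x j) ^ 2)).
Proof.
  intros Ht HK.
  apply (psd_kernel_ext k (fun i j => exp (- t * x i ^ 2) * exp (- t * x j ^ 2) *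
                                      (K i j * exp ((2 * t) * x i * x j)))).
  - intros i j. rewrite (Rmult_comm (K i j)), <- !Rmult_assoc, <- !exp_plus.
    rewrite (Rmult_comm _ (K i j)). f_equal. f_equal. ring.
  - apply psd_kernel_congr, psd_kernel_mul_exp; [lra | exact HK].
Qed.

Lemma psd_kernel_gauss d k (s : nat -> nat -> R) t : 0 <= t ->
  psd_kernel k (fun i j => exp (- t * eucl_dist d (s i) (s j) ^ 2)).
Proof.
  intros Ht.
  apply (psd_kernel_ext k (fun i j => exp (- t * fsum d (fun l => (s i l - s j l) ^ 2)))).
  { intros i j. now rewrite eucl_dist_sqr. }
  induction d; cbn [fsum].
  - eapply psd_kernel_ext; [| apply psd_kernel_1].
    intros; rewrite Rmult_0_r, exp_0; auto.
  - eapply psd_kernel_ext; [| exact (psd_kernel_mul_gauss k _ (fun i => s i d) t Ht IHd)].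
    intros i j; cbv beta. rewrite <- exp_plus. f_equal. ring.
Qed.

Lemma is_RInt_gen_zero Fa Fb {FFa : Filter Fa} {FFb : Filter Fb} :
  is_RInt_gen (fun _ => 0) Fa Fb 0.
Proof.
  assert (H := is_RInt_gen_Derive (Fa := Fa) (Fb := Fb) (fun _ => 0) 0 0).
  rewrite Rminus_0_r in H.
  eapply is_RInt_gen_ext; [| apply H].
  - apply filter_forall; intros; apply Derive_const.
  - apply filter_forall; intros; apply ex_derive_const.
  - apply filter_forall; intros.
    apply continuous_ext with (fun _ => 0); [intros; now rewrite Derive_const |].
    apply continuous_const.
  - apply filterlim_const.
  - apply filterlim_const.
Qed.

Lemma is_RInt_gen_fsum Fa Fb {FFa : Filter Fa} {FFb : Filter Fb} n (F : nat -> R -> R) l :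
  (forall i, is_RInt_gen (F i) Fa Fb (l i)) ->
  is_RInt_gen (fun x => fsum n (fun i => F i x)) Fa Fb (fsum n l).
Proof.
  intros H; induction n as [| n IHn]; cbn [fsum].
  - now apply is_RInt_gen_zero.
  - apply (is_RInt_gen_plus _ _ _ _ IHn (H n)).
Qed.

Lemma is_RInt_gen_ge0 Fa Fb {FFa : ProperFilter Fa} {FFb : ProperFilter Fb} f l :
  filter_prod Fa Fb (fun ab => fst ab <= snd ab) ->
  filter_prod Fa Fb (fun ab => forall x, fst ab <= x <= snd ab -> 0 <= f x) ->
  is_RInt_gen f Fa Fb l -> 0 <= l.
Proof.
  intros Hle Hpos H.
  eapply Rle_trans; [apply (norm_ge_0 (K := R_AbsRing) (V := R_NormedModule) 0) |].
  apply (RInt_gen_norm (V := R_CompleteNormedModule) (fun _ => 0) f 0 l Hle); auto.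
  - eapply filter_imp; [| exact Hpos]. intros ab Hx x Hxx.
    change (Rabs 0 <= f x). rewrite Rabs_R0. now apply Hx.
  - apply is_RInt_gen_zero; apply filter_filter.
Qed.

Lemma is_RInt_gen_iff {Fa Fb : (R -> Prop) -> Prop} {FFa : Filter Fa} {FFb : Filter Fb} (f : R -> R) l :
  is_RInt_gen f Fa Fb l <->
  filter_prod Fa Fb (fun ab => ex_RInt f (fst ab) (snd ab)) /\
  filterlim (fun ab => RInt f (fst ab) (snd ab)) (filter_prod Fa Fb) (locally l).
Proof.
  split.
  - intros H. unfold is_RInt_gen, filterlimi, filter_le, filtermapi in H. split.
    + generalize (H (fun _ => True) filter_true); apply filter_imp.
      intros ab [y [Hy _]]. now exists y.
    + intros P HP. unfold filtermap. generalize (H P HP); apply filter_imp.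
      intros ab [y [Hy Py]]. now rewrite (is_RInt_unique _ _ _ _ Hy).
  - intros [Hex Hlim].
    apply filterlimi_lim_ext_loc with (fun ab => RInt f (fst ab) (snd ab)); [| exact Hlim].
    generalize Hex; apply filter_imp. intros ab Hab; exact (RInt_correct f _ _ Hab).
Qed.

Lemma is_RInt_gen_derive {Fa Fb : (R -> Prop) -> Prop} {FFa : Filter Fa} {FFb : Filter Fb}
  (F f : R -> R) la lb :
  filter_prod Fa Fb (fun ab => forall x, Rmin (fst ab) (snd ab) <= x <= Rmax (fst ab) (snd ab) ->
    is_derive F x (f x) /\ continuous f x) ->
  filterlim F Fa (locally la) -> filterlim F Fb (locally lb) ->
  is_RInt_gen f Fa Fb (lb - la).
Proof.
  intros HF Ha Hb. apply is_RInt_gen_iff.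
  assert (HI : filter_prod Fa Fb
    (fun ab => is_RInt f (fst ab) (snd ab) (F (snd ab) - F (fst ab)))).
  { generalize HF; apply filter_imp. intros ab H.
    apply (is_RInt_derive F f); intros x Hx; apply H, Hx. }
  split.
  - generalize HI; apply filter_imp. intros ab H. eexists; exact H.
  - apply filterlim_ext_loc with (fun ab => plus (F (snd ab)) (opp (F (fst ab)))).
    { generalize HI; apply filter_imp. intros ab H. symmetry. exact (is_RInt_unique _ _ _ _ H). }
    apply (filterlim_comp_2 (G := locally lb) (H := locally (opp la))
             (fun ab => F (snd ab)) (fun ab => opp (F (fst ab))) plus).
    + eapply filterlim_comp; [apply filterlim_snd | exact Hb].
    + eapply filterlim_comp; [eapply filterlim_comp; [apply filterlim_fst | exact Ha] |].
      apply (filterlim_opp (V := R_NormedModule)).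
    + apply (filterlim_plus (V := R_NormedModule) lb (opp la)).
Qed.

Lemma is_RInt_gen_comp {Fa Fb : (R -> Prop) -> Prop} {FFa : Filter Fa} {FFb : Filter Fb}
  {Ga Gb : (R -> Prop) -> Prop} {FGa : Filter Ga} {FGb : Filter Gb}
  (f phi dphi : R -> R) l :
  filterlim phi Fa Ga -> filterlim phi Fb Gb ->
  filter_prod Fa Fb (fun ab => forall x, Rmin (fst ab) (snd ab) <= x <= Rmax (fst ab) (snd ab) ->
    continuous f (phi x) /\ is_derive phi x (dphi x) /\ continuous dphi x) ->
  is_RInt_gen f Ga Gb l ->
  is_RInt_gen (fun y => dphi y * f (phi y)) Fa Fb l.
Proof.
  intros Ha Hb Hreg H.
  destruct (proj1 (is_RInt_gen_iff (Fa := Ga) (Fb := Gb) f l) H) as [_ Hlim].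
  apply is_RInt_gen_iff. split.
  - generalize Hreg; apply filter_imp. intros [a b] Hx.
    eexists. apply (is_RInt_comp f phi dphi a b); intros x Hxx; apply Hx, Hxx.
  - apply filterlim_ext_loc with (fun ab => RInt f (phi (fst ab)) (phi (snd ab))).
    + generalize Hreg; apply filter_imp. intros [a b] Hx.
      symmetry. apply (RInt_comp f phi dphi a b); intros x Hxx; apply Hx, Hxx.
    + apply (filterlim_comp _ _ _ (fun ab => (phi (fst ab), phi (snd ab)))
               (fun ab => RInt f (fst ab) (snd ab)) _ (filter_prod Ga Gb)); [| exact Hlim].
      apply filterlim_pair.
      * eapply filterlim_comp; [apply filterlim_fst | exact Ha].
      * eapply filterlim_comp; [apply filterlim_snd | exact Hb].
Qed.

Lemma filter_prod_at_point_l {G : (R -> Prop) -> Prop} {FG : Filter G} b (P : R * R -> Prop) :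
  filter_prod (at_point b) G P <-> G (fun y => P (b, y)).
Proof.
  split.
  - intros [Q R HQ HR HP]. generalize HR; apply filter_imp. intros y Hy. now apply HP.
  - intros H. exists (fun x => x = b) (fun y => P (b, y)); [reflexivity | exact H |].
    now intros x y ->.
Qed.

Lemma filterlim_filter_prod_at_point_l {G : (R -> Prop) -> Prop} {FG : Filter G}
  b (h : R * R -> R) l :
  filterlim h (filter_prod (at_point b) G) (locally l) <->
  filterlim (fun y => h (b, y)) G (locally l).
Proof.
  split; intros H P HP; apply (filter_prod_at_point_l b (fun ab => P (h ab))); now apply H.
Qed.

Lemma Rabs_RInt_le_compat (f g : R -> R) u v :
  ex_RInt f u v -> ex_RInt g u v ->
  (forall t, Rmin u v < t < Rmax u v -> 0 <= f t <= g t) ->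
  Rabs (RInt f u v) <= Rabs (RInt g u v).
Proof.
  assert (Hle : forall u v, u <= v -> ex_RInt f u v -> ex_RInt g u v ->
            (forall t, u < t < v -> 0 <= f t <= g t) ->
            Rabs (RInt f u v) <= Rabs (RInt g u v)).
  { intros p q Hpq Hf Hg H.
    assert (0 <= RInt f p q) by (apply RInt_ge_0; [exact Hpq | exact Hf | intros; apply H; lra]).
    assert (RInt f p q <= RInt g p q)
      by (apply RInt_le; [exact Hpq | exact Hf | exact Hg | intros; apply H; lra]).
    rewrite !Rabs_pos_eq; lra. }
  intros Hf Hg H. destruct (Rle_or_lt u v) as [Huv | Huv].
  - apply Hle; [exact Huv | exact Hf | exact Hg |].
    now rewrite Rmin_left, Rmax_right in H.
  - apply ex_RInt_swap in Hf, Hg.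
    rewrite <- (opp_RInt_swap f v u Hf), <- (opp_RInt_swap g v u Hg).
    change (Rabs (- RInt f v u) <= Rabs (- RInt g v u)). rewrite !Rabs_Ropp.
    apply Hle; [lra | exact Hf | exact Hg |].
    rewrite Rmin_right, Rmax_left in H by lra. exact H.
Qed.

Lemma RInt_Chasles_minus (f : R -> R) b u v :
  ex_RInt f b u -> ex_RInt f b v -> RInt f b v - RInt f b u = RInt f u v.
Proof.
  intros Hu Hv.
  assert (Huv : ex_RInt f u v) by (apply ex_RInt_Chasles with b; [apply ex_RInt_swap |]; assumption).
  rewrite <- (RInt_Chasles f b u v Hu Huv). change (RInt f b u + RInt f u v - RInt f b u = RInt f u v).
  ring.
Qed.

(* Comparison test: the Cauchy criterion for [y => RInt g b y] transfers to [f]. *)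
Lemma ex_RInt_gen_dominated (b : R) G {FG : ProperFilter G} (f g : R -> R) (D : R -> Prop) lg :
  G D ->
  (forall x, D x -> forall t, Rmin b x <= t <= Rmax b x -> continuous f t) ->
  (forall x y, D x -> D y -> forall t, Rmin x y < t < Rmax x y -> 0 <= f t <= g t) ->
  is_RInt_gen g (at_point b) G lg ->
  ex_RInt_gen f (at_point b) G.
Proof.
  intros HD Hc Hfg Hg.
  assert (FG' : Filter G) by apply filter_filter.
  destruct (proj1 (is_RInt_gen_iff g lg) Hg) as [Hex Hlim].
  apply (filter_prod_at_point_l b (fun ab => ex_RInt g (fst ab) (snd ab))) in Hex.
  apply (filterlim_filter_prod_at_point_l b (fun ab => RInt g (fst ab) (snd ab))) in Hlim.
  assert (Hfex : forall y, D y -> ex_RInt f b y).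
  { intros y Hy. apply (ex_RInt_continuous (V := R_CompleteNormedModule)). now apply Hc. }
  assert (Hcauchy : exists l, filterlim (fun y => RInt f b y) G (locally l)).
  { apply (filterlim_locally_cauchy (F := G)). intros eps.
    destruct (proj2 (filterlim_locally_cauchy (F := G) (fun y => RInt g b y))
                (ex_intro _ lg Hlim) eps) as [P [HP HPc]].
    exists (fun y => P y /\ D y /\ ex_RInt g b y). split.
    - repeat apply filter_and; assumption.
    - intros u v [Pu [Du Eu]] [Pv [Dv Ev]].
      specialize (HPc u v Pu Pv).
      change (Rabs (RInt f b v - RInt f b u) < eps).
      change (Rabs (RInt g b v - RInt g b u) < eps) in HPc.
      rewrite !RInt_Chasles_minus in HPc |- * by auto.
      eapply Rle_lt_trans; [| exact HPc].
      apply Rabs_RInt_le_compat; [| | now apply Hfg];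
        (apply ex_RInt_Chasles with b; [apply ex_RInt_swap |]; auto). }
  destruct Hcauchy as [l Hl]. exists l.
  apply is_RInt_gen_iff. split.
  - apply (filter_prod_at_point_l b (fun ab => ex_RInt f (fst ab) (snd ab))).
    generalize HD; apply filter_imp. exact Hfex.
  - now apply (filterlim_filter_prod_at_point_l b (fun ab => RInt f (fst ab) (snd ab))).
Qed.

Lemma at_right_0_lt b : 0 < b -> at_right 0 (fun y => 0 < y < b).
Proof.
  intros Hb. exists (mkposreal b Hb). intros y Hy Hp.
  change (Rabs (y - 0) < b) in Hy. apply Rabs_def2 in Hy. lra.
Qed.

Lemma filter_prod_at_right_0_at_point b (P : R * R -> Prop) :
  0 < b -> (forall u, 0 < u < b -> P (u, b)) -> filter_prod (at_right 0) (at_point b) P.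
Proof.
  intros Hb HP. exists (fun y => 0 < y < b) (fun y => y = b).
  - now apply at_right_0_lt.
  - reflexivity.
  - intros u v Hu ->. now apply HP.
Qed.

Lemma filter_prod_at_right_0_at_point_segment b (P : R -> Prop) :
  0 < b -> (forall x, 0 < x -> P x) ->
  filter_prod (at_right 0) (at_point b)
    (fun ab => forall x, Rmin (fst ab) (snd ab) <= x <= Rmax (fst ab) (snd ab) -> P x).
Proof.
  intros Hb HP. apply filter_prod_at_right_0_at_point; [exact Hb |].
  intros u Hu x Hx. simpl in Hx. rewrite Rmin_left in Hx by lra. apply HP. lra.
Qed.

Lemma filter_prod_at_right_0_at_point_open_segment b (P : R -> Prop) :
  0 < b -> (forall x, 0 < x -> P x) ->
  filter_prod (at_right 0) (at_point b)
    (fun ab => forall x, Rmin (fst ab) (snd ab) < x < Rmax (fst ab) (snd ab) -> P x).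
Proof.
  intros Hb HP. generalize (filter_prod_at_right_0_at_point_segment b P Hb HP).
  apply filter_imp. intros ab H x Hx. apply H. lra.
Qed.

(** * Positive definite radial functions *)

Definition radial_pd (f : R -> R) :=
  forall (d k : nat) (a : nat -> R) (s : nat -> nat -> R),
    0 <= fsum k (fun i => fsum k (fun j => a i * a j * f (eucl_dist d (s i) (s j)))).

Lemma radial_pd_ext f g : (forall h, 0 <= h -> f h = g h) -> radial_pd f -> radial_pd g.
Proof.
  intros E H d k a s. erewrite fsum_ext; [apply (H d k a s) |].
  intros i; apply fsum_ext; intros j. rewrite E; [easy | apply sqrt_pos].
Qed.

Lemma radial_pd_plus f g : radial_pd f -> radial_pd g -> radial_pd (fun h => f h + g h).
Proof.
  intros Hf Hg d k a s.
  erewrite fsum_ext.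
  2:{ intros i. rewrite <- fsum_plus. apply fsum_ext; intros j. apply Rmult_plus_distr_l. }
  rewrite fsum_plus. specialize (Hf d k a s). specialize (Hg d k a s). lra.
Qed.

Lemma radial_pd_scal c f : 0 <= c -> radial_pd f -> radial_pd (fun h => c * f h).
Proof.
  intros Hc Hf d k a s.
  erewrite fsum_ext.
  2:{ intros i. rewrite <- fsum_scal. apply fsum_ext; intros j.
      replace (a i * a j * (c * _)) with (c * (a i * a j * f (eucl_dist d (s i) (s j))))
        by ring. reflexivity. }
  rewrite fsum_scal. now apply Rmult_le_pos.
Qed.

Lemma radial_pd_gauss_mixture (b : R) (w g f : R -> R) :
  0 < b -> (forall x, 0 < x -> 0 <= w x /\ 0 <= g x) ->
  (forall h, 0 <= h ->
     is_RInt_gen (fun x => w x * exp (- g x * h ^ 2)) (at_right 0) (at_point b) (f h)) ->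
  radial_pd f.
Proof.
  intros Hb Hwg Hf d k a s.
  set (D := fun i j => eucl_dist d (s i) (s j)).
  assert (H : is_RInt_gen
    (fun x => fsum k (fun i => fsum k (fun j => a i * a j * (w x * exp (- g x * D i j ^ 2)))))
    (at_right 0) (at_point b) (fsum k (fun i => fsum k (fun j => a i * a j * f (D i j))))).
  { apply (is_RInt_gen_fsum (at_right 0) (at_point b)); intros i.
    apply (is_RInt_gen_fsum (at_right 0) (at_point b)); intros j.
    apply (is_RInt_gen_scal (V := R_NormedModule) _ (a i * a j) (f (D i j))), Hf, sqrt_pos. }
  refine (is_RInt_gen_ge0 _ _ _ _ _ _ H);
    apply filter_prod_at_right_0_at_point; try exact Hb; intros u Hu; cbn [fst snd]; [lra |].
  intros x Hx. destruct (Hwg x ltac:(lra)) as [Hw Hg].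
  rewrite (fsum_ext k _ (fun i => w x * fsum k (fun j => a i * a j * exp (- g x * D i j ^ 2)))).
  - rewrite fsum_scal. apply Rmult_le_pos; [exact Hw | exact (psd_kernel_gauss d k s (g x) Hg a)].
  - intros i. rewrite <- fsum_scal. apply fsum_ext; intros j. ring.
Qed.

(** * The generalized incomplete gamma integrand *)

(* [gen_inc_gamma a b c] is, by definition, the integral of [ggamma_integrand a c] over
   [[b, oo)]. *)
Definition ggamma_integrand (a c t : R) : R := Rpower t (a - 1) * exp (- t - c / t).

Definition ggamma_lower (a c b : R) : R :=
  RInt_gen (ggamma_integrand a c) (at_right 0) (at_point b).

Definition ggamma_total (a c : R) : R :=
  RInt_gen (ggamma_integrand a c) (at_right 0) (Rbar_locally p_infty).

Lemma exp_le x y : x <= y -> exp x <= exp y.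
Proof. intros [H | ->]; [now apply Rlt_le, exp_increasing | apply Rle_refl]. Qed.

Lemma ggamma_integrand_pos a c t : 0 < ggamma_integrand a c t.
Proof. apply Rmult_lt_0_compat; apply exp_pos. Qed.

Lemma ggamma_integrand_continuous a c t : 0 < t -> continuous (ggamma_integrand a c) t.
Proof.
  intros Ht. apply (ex_derive_continuous (K := R_AbsRing) (V := R_NormedModule)).
  unfold ggamma_integrand, Rpower. auto_derive. lra.
Qed.

Lemma ggamma_integrand_le_Rpower a c t :
  0 <= c -> 0 < t -> ggamma_integrand a c t <= Rpower t (a - 1).
Proof.
  intros Hc Ht. unfold ggamma_integrand.
  rewrite <- (Rmult_1_r (Rpower t (a - 1))) at 2.
  apply Rmult_le_compat_l; [apply Rlt_le, exp_pos |].
  rewrite <- exp_0. apply exp_le.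
  assert (0 <= c / t) by (apply Rmult_le_pos; [exact Hc | now apply Rlt_le, Rinv_0_lt_compat]).
  lra.
Qed.

(* With [M = |a - 1| + 1], [ln y <= y - 1] at [y = t / (2 M)] gives
   [M ln t <= t / 2 + M (ln (2 M) - 1)], hence [t ^ (a - 1) <= C e ^ (t / 2)] for [t >= 1]. *)
Lemma ggamma_integrand_exp_bound a :
  exists C, forall c t, 0 <= c -> 1 <= t -> ggamma_integrand a c t <= C * exp (- (t / 2)).
Proof.
  set (M := Rabs (a - 1) + 1).
  assert (HM : 1 <= M) by (unfold M; pose proof (Rabs_pos (a - 1)); lra).
  exists (exp (M * (ln (2 * M) - 1))). intros c t Hc Ht.
  unfold ggamma_integrand, Rpower. rewrite <- !exp_plus. apply exp_le.
  assert (0 <= c / t) by (apply Rmult_le_pos; [exact Hc | apply Rlt_le, Rinv_0_lt_compat; lra]).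
  assert (Hl : 0 <= ln t)
    by (destruct Ht as [Ht | <-]; [rewrite <- ln_1; apply Rlt_le, ln_increasing | rewrite ln_1]; lra).
  assert (H1 : (a - 1) * ln t <= M * ln t)
    by (apply Rmult_le_compat_r; [exact Hl | unfold M; pose proof (Rle_abs (a - 1)); lra]).
  assert (Hq : 0 < t / (2 * M)) by (apply Rdiv_lt_0_compat; lra).
  assert (H2 : ln t <= t / (2 * M) - 1 + ln (2 * M)).
  { replace (ln t) with (ln (t / (2 * M)) + ln (2 * M))
      by (rewrite <- ln_mult by lra; f_equal; field; lra).
    pose proof (exp_ineq1_le (ln (t / (2 * M)))) as Hexp. rewrite exp_ln in Hexp by exact Hq.
    lra. }
  assert (H3 : M * ln t <= t / 2 + M * (ln (2 * M) - 1)).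
  { replace (t / 2 + M * (ln (2 * M) - 1)) with (M * (t / (2 * M) - 1 + ln (2 * M)))
      by (field; lra).
    apply Rmult_le_compat_l; lra. }
  lra.
Qed.

Lemma at_right_0_pos : at_right 0 (fun y => 0 < y).
Proof. unfold at_right, within. apply filter_forall. auto. Qed.

Lemma filterlim_Rpower_at_right_0 a :
  0 < a -> filterlim (fun y => Rpower y a) (at_right 0) (locally 0).
Proof.
  intros Ha. unfold Rpower.
  eapply filterlim_comp; [| exact is_lim_exp_m].
  eapply filterlim_comp; [exact is_lim_ln_0 |].
  assert (H := filterlim_Rbar_mult_l a m_infty).
  replace (Rbar_mult a m_infty) with m_infty in H; [exact H |].
  simpl. destruct (Rle_dec 0 a) as [Ha' |]; [| lra].
  destruct (Rle_lt_or_eq_dec 0 a Ha'); [reflexivity | lra].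
Qed.

Lemma filterlim_exp_neg_p_infty k :
  0 < k -> filterlim (fun y => exp (- (k * y))) (Rbar_locally p_infty) (locally 0).
Proof.
  intros Hk.
  eapply filterlim_comp; [| exact is_lim_exp_m].
  assert (H := filterlim_Rbar_mult_l (- k) p_infty).
  replace (Rbar_mult (- k) p_infty) with m_infty in H.
  - eapply filterlim_ext; [| exact H]. intros y; simpl; ring.
  - simpl. destruct (Rle_dec 0 (- k)); [exfalso; lra | reflexivity].
Qed.

Lemma filterlim_mult_const_0 (f : R -> R) F k :
  filterlim f F (locally 0) -> filterlim (fun y => k * f y) F (locally 0).
Proof.
  intros H. eapply filterlim_comp; [exact H |].
  assert (Hk := filterlim_scal_r (V := R_NormedModule) k 0).
  change (scal k 0) with (k * 0) in Hk. rewrite Rmult_0_r in Hk. exact Hk.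
Qed.

Lemma filterlim_at_point (f : R -> R) x : filterlim f (at_point x) (locally (f x)).
Proof. intros Q HQ. exact (locally_singleton _ _ HQ). Qed.

Lemma is_RInt_gen_Rpower_at_right_0 a :
  0 < a -> is_RInt_gen (fun s => Rpower s (a - 1)) (at_point 1) (at_right 0) (- / a).
Proof.
  intros Ha.
  set (F := fun y => Rpower y a / a).
  replace (- / a) with (0 - F 1) by (unfold F, Rpower; rewrite ln_1, Rmult_0_r, exp_0; field; lra).
  apply (is_RInt_gen_derive F).
  - apply (filter_prod_at_point_l 1 (fun ab => forall x, Rmin (fst ab) (snd ab) <= x <= Rmax (fst ab) (snd ab) ->
      is_derive F x (Rpower x (a - 1)) /\ continuous (fun s => Rpower s (a - 1)) x)).
    generalize at_right_0_pos; apply filter_imp. intros y Hy x [Hx _]. simpl in Hx.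
    assert (Hx0 : 0 < x) by (assert (0 < Rmin 1 y) by (apply Rmin_glb_lt; lra); lra).
    split.
    + unfold F, Rpower. auto_derive; [lra |].
      replace ((a - 1) * ln x) with (a * ln x + - ln x) by ring.
      rewrite exp_plus, exp_Ropp, exp_ln by exact Hx0. field. split; lra.
    + apply (ex_derive_continuous (K := R_AbsRing) (V := R_NormedModule)).
      unfold Rpower. auto_derive. exact Hx0.
  - apply filterlim_at_point.
  - unfold F. eapply filterlim_ext; [intros y; apply Rmult_comm |].
    apply filterlim_mult_const_0, filterlim_Rpower_at_right_0, Ha.
Qed.

Lemma is_RInt_gen_exp_p_infty C :
  is_RInt_gen (fun s => C * exp (- (s / 2))) (at_point 1) (Rbar_locally p_infty)
    (2 * C * exp (- (1 / 2))).
Proof.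
  set (F := fun y => - 2 * C * exp (- (y / 2))).
  replace (2 * C * exp (- (1 / 2))) with (0 - F 1) by (unfold F; ring).
  apply (is_RInt_gen_derive F).
  - apply filter_forall. intros ab x _. split.
    + unfold F. auto_derive; [easy | unfold Rdiv; field].
    + apply (ex_derive_continuous (K := R_AbsRing) (V := R_NormedModule)). auto_derive. easy.
  - apply filterlim_at_point.
  - unfold F. apply filterlim_mult_const_0.
    eapply filterlim_ext; [| apply (filterlim_exp_neg_p_infty (/ 2)); lra].
    intros y; cbv beta. f_equal. field.
Qed.

Lemma ex_RInt_ggamma_integrand a c u v : 0 < u -> 0 < v -> ex_RInt (ggamma_integrand a c) u v.
Proof.
  intros Hu Hv. apply (ex_RInt_continuous (V := R_CompleteNormedModule)).
  intros z [Hz _]. apply ggamma_integrand_continuous.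
  assert (0 < Rmin u v) by (apply Rmin_glb_lt; assumption). lra.
Qed.

Lemma ex_RInt_gen_ggamma_at_right_0 a c b :
  0 < a -> 0 <= c -> 0 < b -> ex_RInt_gen (ggamma_integrand a c) (at_right 0) (at_point b).
Proof.
  intros Ha Hc Hb.
  apply (ex_RInt_gen_Chasles _ 1).
  - destruct (ex_RInt_gen_dominated 1 (at_right 0) (ggamma_integrand a c)
      (fun s => Rpower s (a - 1)) (fun y => 0 < y < 1) (- / a) (at_right_0_lt 1 Rlt_0_1))
      as [l Hl].
    + intros x Hx t [Ht _]. apply ggamma_integrand_continuous.
      assert (0 < Rmin 1 x) by (apply Rmin_glb_lt; lra). lra.
    + intros x y Hx Hy t [Ht _].
      assert (0 < Rmin x y) by (apply Rmin_glb_lt; lra).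
      split; [apply Rlt_le, ggamma_integrand_pos | apply ggamma_integrand_le_Rpower; lra].
    + now apply is_RInt_gen_Rpower_at_right_0.
    + exists (opp l). now apply is_RInt_gen_swap.
  - apply (ex_RInt_gen_at_point (V := R_CompleteNormedModule)), ex_RInt_ggamma_integrand; lra.
Qed.

Lemma ex_RInt_gen_ggamma_p_infty a c b :
  0 <= c -> 0 < b -> ex_RInt_gen (ggamma_integrand a c) (at_point b) (Rbar_locally p_infty).
Proof.
  intros Hc Hb. destruct (ggamma_integrand_exp_bound a) as [C HC].
  apply (ex_RInt_gen_Chasles _ 1).
  - apply (ex_RInt_gen_at_point (V := R_CompleteNormedModule)), ex_RInt_ggamma_integrand; lra.
  - apply (ex_RInt_gen_dominated 1 _ (ggamma_integrand a c) (fun s => C * exp (- (s / 2)))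
      (fun y => 1 < y) (2 * C * exp (- (1 / 2))) (ex_intro _ 1 (fun y Hy => Hy))).
    + intros x Hx t [Ht _]. apply ggamma_integrand_continuous.
      assert (0 < Rmin 1 x) by (apply Rmin_glb_lt; lra). lra.
    + intros x y Hx Hy t [Ht _].
      assert (1 < Rmin x y) by (apply Rmin_glb_lt; lra).
      split; [apply Rlt_le, ggamma_integrand_pos | apply HC; lra].
    + apply is_RInt_gen_exp_p_infty.
Qed.

Lemma is_RInt_gen_ggamma_lower a c b : 0 < a -> 0 <= c -> 0 < b ->
  is_RInt_gen (ggamma_integrand a c) (at_right 0) (at_point b) (ggamma_lower a c b).
Proof.
  intros. apply (RInt_gen_correct (V := R_CompleteNormedModule)).
  now apply ex_RInt_gen_ggamma_at_right_0.
Qed.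

Lemma is_RInt_gen_gen_inc_gamma a b c : 0 <= c -> 0 < b ->
  is_RInt_gen (ggamma_integrand a c) (at_point b) (Rbar_locally p_infty) (gen_inc_gamma a b c).
Proof.
  intros. apply (RInt_gen_correct (V := R_CompleteNormedModule)).
  now apply ex_RInt_gen_ggamma_p_infty.
Qed.

Lemma is_RInt_gen_ggamma_split a c b : 0 < a -> 0 <= c -> 0 < b ->
  is_RInt_gen (ggamma_integrand a c) (at_right 0) (Rbar_locally p_infty)
    (ggamma_lower a c b + gen_inc_gamma a b c).
Proof.
  intros Ha Hc Hb.
  pose proof (is_RInt_gen_Chasles (V := R_NormedModule) _ b _ _
    (is_RInt_gen_ggamma_lower a c b Ha Hc Hb) (is_RInt_gen_gen_inc_gamma a b c Hc Hb)) as H.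
  change (plus ?x ?y) with (x + y) in H. exact H.
Qed.

Lemma ggamma_total_split a c b : 0 < a -> 0 <= c -> 0 < b ->
  ggamma_total a c = ggamma_lower a c b + gen_inc_gamma a b c.
Proof.
  intros Ha Hc Hb.
  exact (is_RInt_gen_unique (V := R_CompleteNormedModule) _ _
           (is_RInt_gen_ggamma_split a c b Ha Hc Hb)).
Qed.

Lemma ggamma_lower_nonneg a c b : 0 < a -> 0 <= c -> 0 < b -> 0 <= ggamma_lower a c b.
Proof.
  intros Ha Hc Hb.
  refine (is_RInt_gen_ge0 _ _ _ _ _ _ (is_RInt_gen_ggamma_lower a c b Ha Hc Hb)).
  - apply filter_prod_at_right_0_at_point; [exact Hb |]. intros u Hu; simpl; lra.
  - apply filter_forall. intros; apply Rlt_le, ggamma_integrand_pos.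
Qed.

Lemma Gamma_fun_ggamma_total a : 0 < a -> Gamma_fun a = ggamma_total a 0.
Proof.
  intros Ha. rewrite (ggamma_total_split a 0 1) by lra.
  assert (H : is_RInt_gen (fun t => Rpower t (a - 1) * exp (- t)) (at_right 0)
                (Rbar_locally p_infty) (ggamma_lower a 0 1 + gen_inc_gamma a 1 0)).
  { eapply is_RInt_gen_ext; [| exact (is_RInt_gen_ggamma_split a 0 1 Ha (Rle_refl 0) Rlt_0_1)].
    apply filter_forall. intros ab t _. unfold ggamma_integrand.
    now rewrite Rdiv_0_l, Rminus_0_r. }
  exact (is_RInt_gen_unique (V := R_CompleteNormedModule) _ _ H).
Qed.

Lemma gen_inc_gamma_nonneg a b c : 0 <= c -> 0 < b -> 0 <= gen_inc_gamma a b c.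
Proof.
  intros Hc Hb.
  refine (is_RInt_gen_ge0 _ _ _ _ _ _ (is_RInt_gen_gen_inc_gamma a b c Hc Hb)).
  - exists (fun y => y = b) (fun y => b < y); [reflexivity | now exists b |].
    intros x y -> Hy; simpl; lra.
  - apply filter_forall. intros; apply Rlt_le, ggamma_integrand_pos.
Qed.

Lemma Gamma_fun_pos a : 0 < a -> 0 < Gamma_fun a.
Proof.
  intros Ha. rewrite Gamma_fun_ggamma_total, (ggamma_total_split a 0 2) by lra.
  assert (H : is_RInt_gen (ggamma_integrand a 0) (at_right 0) (at_point 2)
    (ggamma_lower a 0 1 + RInt (ggamma_integrand a 0) 1 2)).
  { pose proof (is_RInt_gen_Chasles (V := R_NormedModule) _ 1 _ _
      (is_RInt_gen_ggamma_lower a 0 1 Ha (Rle_refl 0) Rlt_0_1)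
      (proj2 (is_RInt_gen_at_point _ _ _ _)
         (RInt_correct (V := R_CompleteNormedModule) _ _ _
            (ex_RInt_ggamma_integrand a 0 1 2 Rlt_0_1 Rlt_0_2)))) as H.
    change (plus ?x ?y) with (x + y) in H. exact H. }
  assert (E : ggamma_lower a 0 2 = ggamma_lower a 0 1 + RInt (ggamma_integrand a 0) 1 2)
    by exact (is_RInt_gen_unique (V := R_CompleteNormedModule) _ _ H).
  assert (0 < RInt (ggamma_integrand a 0) 1 2).
  { apply RInt_gt_0; [lra | intros; apply ggamma_integrand_pos |].
    intros; apply ggamma_integrand_continuous; lra. }
  pose proof (ggamma_lower_nonneg a 0 1 Ha (Rle_refl 0) Rlt_0_1).
  pose proof (gen_inc_gamma_nonneg a 2 0 (Rle_refl 0) Rlt_0_2).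
  lra.
Qed.

(** * The Matérn function as a generalized gamma integral *)

Lemma ch_opp t : ch (- t) = ch t.
Proof. unfold ch. rewrite Ropp_involutive. field. Qed.

(* The substitution [s = (z/2) e^t] turns [ggamma_integrand nu (z^2/4) s ds] into
   [(z/2)^nu e^(nu t) e^(-z ch t) dt], because [s + z^2/(4 s) = z ch t]. *)
Lemma ggamma_integrand_exp_subst nu z t : 0 < z ->
  z / 2 * exp t * ggamma_integrand nu (z ^ 2 / 4) (z / 2 * exp t) =
  Rpower (z / 2) nu * exp (nu * t) * exp (- z * ch t).
Proof.
  intros Hz. unfold ggamma_integrand, Rpower.
  replace (- (z / 2 * exp t) - z ^ 2 / 4 / (z / 2 * exp t)) with (- z * ch t)
    by (unfold ch; rewrite exp_Ropp; pose proof (exp_pos t); field; lra).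
  rewrite ln_mult, ln_exp by (lra || apply exp_pos).
  replace (z / 2 * exp t) with (exp (ln (z / 2) + t)) at 1 by (rewrite exp_plus, exp_ln; lra).
  rewrite <- !exp_plus. f_equal. ring.
Qed.

Lemma filterlim_mult_exp_p_infty b :
  0 < b -> filterlim (fun t => b * exp t) (Rbar_locally p_infty) (Rbar_locally p_infty).
Proof.
  intros Hb. eapply filterlim_comp; [exact is_lim_exp_p |].
  assert (H := filterlim_Rbar_mult_l b p_infty).
  replace (Rbar_mult b p_infty) with p_infty in H; [exact H |].
  simpl. destruct (Rle_dec 0 b) as [Hb' |]; [| lra].
  destruct (Rle_lt_or_eq_dec 0 b Hb'); [reflexivity | lra].
Qed.

Lemma filterlim_mult_exp_opp_at_right_0 b :
  0 < b -> filterlim (fun t => b * exp (- t)) (Rbar_locally p_infty) (at_right 0).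
Proof.
  intros Hb P HP.
  assert (H : filterlim (fun t => b * exp (- t)) (Rbar_locally p_infty) (locally 0)).
  { apply filterlim_mult_const_0.
    eapply filterlim_ext; [| apply (filterlim_exp_neg_p_infty 1 Rlt_0_1)].
    intros t; cbv beta. now rewrite Rmult_1_l. }
  specialize (H _ HP). unfold filtermap in H |- *.
  generalize H; apply filter_imp. intros t Ht. apply Ht.
  apply Rmult_lt_0_compat; [exact Hb | apply exp_pos].
Qed.

(* Substituting [s = (z/2) e^t] on [[z/2, oo)] and [s = (z/2) e^(-t)] on [(0, z/2]]. *)
Lemma BesselK_ggamma_total nu z : 0 < nu -> 0 < z ->
  BesselK nu z = / (2 * Rpower (z / 2) nu) * ggamma_total nu (z ^ 2 / 4).
Proof.
  intros Hnu Hz.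
  set (b := z / 2). set (c := z ^ 2 / 4).
  assert (Hb : 0 < b) by (unfold b; lra).
  assert (Hc : 0 <= c) by (unfold c; pose proof (pow2_ge_0 z); lra).
  assert (Hreg : forall sgn, filter_prod (at_point 0) (Rbar_locally p_infty) (fun ab =>
      forall x, Rmin (fst ab) (snd ab) <= x <= Rmax (fst ab) (snd ab) ->
        continuous (ggamma_integrand nu c) (b * exp (sgn * x)) /\
        is_derive (fun t => b * exp (sgn * t)) x (sgn * (b * exp (sgn * x))) /\
        continuous (fun t => sgn * (b * exp (sgn * t))) x)).
  { intros sgn. apply filter_forall. intros ab x _. split; [| split].
    - apply ggamma_integrand_continuous, Rmult_lt_0_compat; [exact Hb | apply exp_pos].
    - auto_derive; [easy | ring].
    - apply (ex_derive_continuous (K := R_AbsRing) (V := R_NormedModule)). auto_derive. easy. }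
  assert (Hup : is_RInt_gen (fun t => 1 * (b * exp (1 * t)) * ggamma_integrand nu c (b * exp (1 * t)))
                  (at_point 0) (Rbar_locally p_infty) (gen_inc_gamma nu b c)).
  { apply (is_RInt_gen_comp (Ga := at_point b) (Gb := Rbar_locally p_infty)).
    - intros P HP. unfold filtermap, at_point in *. now rewrite Rmult_0_r, exp_0, Rmult_1_r.
    - eapply filterlim_ext; [| apply (filterlim_mult_exp_p_infty b Hb)].
      intros t; cbv beta. now rewrite Rmult_1_l.
    - apply Hreg.
    - now apply is_RInt_gen_gen_inc_gamma. }
  assert (Hlow : is_RInt_gen (fun t => -1 * (b * exp (-1 * t)) * ggamma_integrand nu c (b * exp (-1 * t)))
                   (at_point 0) (Rbar_locally p_infty) (opp (ggamma_lower nu c b))).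
  { apply (is_RInt_gen_comp (Ga := at_point b) (Gb := at_right 0)).
    - intros P HP. unfold filtermap, at_point in *. now rewrite Rmult_0_r, exp_0, Rmult_1_r.
    - eapply filterlim_ext; [| apply (filterlim_mult_exp_opp_at_right_0 b Hb)].
      intros t; cbv beta. now replace (-1 * t) with (- t) by ring.
    - apply Hreg.
    - apply (is_RInt_gen_swap (V := R_NormedModule)). now apply is_RInt_gen_ggamma_lower. }
  pose proof (is_RInt_gen_scal (V := R_NormedModule) _ (/ (2 * Rpower b nu)) _
                (is_RInt_gen_minus (V := R_NormedModule) _ _ _ _ Hup Hlow)) as H.
  change (scal ?x ?y) with (x * y) in H. change (minus ?x ?y) with (x - y) in H.
  change (opp ?x) with (- x) in H.
  assert (HK : is_RInt_gen (fun t => exp (- z * ch t) * ch (nu * t)) (at_point 0)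
    (Rbar_locally p_infty) (/ (2 * Rpower b nu) * (gen_inc_gamma nu b c - - ggamma_lower nu c b))).
  { eapply is_RInt_gen_ext; [| exact H].
    apply filter_forall. intros ab t _. cbv beta.
    replace (-1 * t) with (- t) by ring. rewrite !Rmult_1_l.
    replace (-1 * (b * exp (- t)) * ggamma_integrand nu c (b * exp (- t)))
      with (- (b * exp (- t) * ggamma_integrand nu c (b * exp (- t)))) by ring.
    unfold b, c. rewrite !ggamma_integrand_exp_subst, ch_opp by exact Hz.
    assert (0 < Rpower (z / 2) nu) by apply exp_pos.
    unfold ch. replace (nu * - t) with (- (nu * t)) by ring.
    match goal with |- ?x = ?y => change (@eq R x y) end. field. lra. }
  rewrite (ggamma_total_split nu c b Hnu Hc Hb).
  replace (ggamma_lower nu c b + gen_inc_gamma nu b c)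
    with (gen_inc_gamma nu b c - - ggamma_lower nu c b) by ring.
  exact (is_RInt_gen_unique (V := R_CompleteNormedModule) _ _ HK).
Qed.

Lemma Rpower_2_mult z nu : 0 < z -> Rpower 2 (1 - nu) * Rpower z nu = 2 * Rpower (z / 2) nu.
Proof.
  intros Hz. unfold Rpower. unfold Rdiv. rewrite ln_mult, ln_Rinv by lra.
  transitivity (exp (ln 2) * exp (nu * (ln z + - ln 2))).
  - rewrite <- !exp_plus. f_equal. ring.
  - now rewrite exp_ln by lra.
Qed.

Lemma matern_ggamma_total h alpha nu : 0 <= h -> 0 < alpha -> 0 < nu ->
  matern h alpha nu = ggamma_total nu (h ^ 2 / (4 * alpha ^ 2)) / Gamma_fun nu.
Proof.
  intros Hh Ha Hnu.
  assert (HG := Gamma_fun_pos nu Hnu).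
  unfold matern. destruct (Req_EM_T h 0) as [-> | Hh0].
  - replace (0 ^ 2 / (4 * alpha ^ 2)) with 0 by (simpl; field; lra).
    rewrite <- Gamma_fun_ggamma_total by exact Hnu. field. lra.
  - assert (Hz : 0 < h / alpha) by (apply Rdiv_lt_0_compat; lra).
    rewrite BesselK_ggamma_total by assumption.
    replace ((h / alpha) ^ 2 / 4) with (h ^ 2 / (4 * alpha ^ 2)) by (field; lra).
    assert (0 < Rpower (h / alpha / 2) nu) by apply exp_pos.
    replace (Rpower 2 (1 - nu) / Gamma_fun nu * Rpower (h / alpha) nu)
      with (Rpower 2 (1 - nu) * Rpower (h / alpha) nu / Gamma_fun nu) by (field; lra).
    rewrite Rpower_2_mult by exact Hz. field. lra.
Qed.

Lemma radial_pd_truncated_matern alpha nu xi : 0 < alpha -> 0 < nu -> 0 < xi ->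
  radial_pd (fun h => matern h alpha nu
    - / Gamma_fun nu * gen_inc_gamma nu (/ (4 * xi * alpha ^ 2)) (h ^ 2 / (4 * alpha ^ 2))).
Proof.
  intros Ha Hnu Hxi.
  set (b := / (4 * xi * alpha ^ 2)).
  assert (Ha2 : 0 < alpha ^ 2) by (apply pow_lt, Ha).
  assert (Hb : 0 < b) by (apply Rinv_0_lt_compat; nra).
  assert (HG := Gamma_fun_pos nu Hnu).
  apply (radial_pd_gauss_mixture b (fun s => / Gamma_fun nu * (Rpower s (nu - 1) * exp (- s)))
           (fun s => / (4 * alpha ^ 2 * s))); [exact Hb | |].
  { intros s Hs. split.
    - apply Rmult_le_pos; [now apply Rlt_le, Rinv_0_lt_compat |].
      apply Rmult_le_pos; apply Rlt_le, exp_pos.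
    - apply Rlt_le, Rinv_0_lt_compat. nra. }
  intros h Hh.
  set (c := h ^ 2 / (4 * alpha ^ 2)).
  assert (Hc : 0 <= c) by (apply Rmult_le_pos; [apply pow2_ge_0 | apply Rlt_le, Rinv_0_lt_compat; lra]).
  rewrite matern_ggamma_total by assumption. fold c.
  rewrite (ggamma_total_split nu c b) by assumption.
  replace ((ggamma_lower nu c b + gen_inc_gamma nu b c) / Gamma_fun nu - / Gamma_fun nu * gen_inc_gamma nu b c)
    with (/ Gamma_fun nu * ggamma_lower nu c b) by (field; lra).
  pose proof (is_RInt_gen_scal (V := R_NormedModule) _ (/ Gamma_fun nu) _
                (is_RInt_gen_ggamma_lower nu c b Hnu Hc Hb)) as H.
  eapply is_RInt_gen_ext; [| exact H].
  apply filter_prod_at_right_0_at_point_open_segment; [exact Hb |].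
  intros s Hs. change (scal ?x ?y) with (x * y). unfold ggamma_integrand, c.
  rewrite !Rmult_assoc, <- exp_plus. do 3 f_equal. field. lra.
Qed.

Lemma filterlim_mult_at_right_0 l : 0 < l -> filterlim (fun t => l * t) (at_right 0) (at_right 0).
Proof.
  intros Hl P [eps Heps].
  assert (He : 0 < eps / l) by (apply Rdiv_lt_0_compat; [apply cond_pos | exact Hl]).
  exists (mkposreal _ He). intros y Hy Hp. apply Heps; [| nra].
  change (Rabs (y - 0) < eps / l) in Hy. change (Rabs (l * y - 0) < eps).
  rewrite Rminus_0_r, Rabs_pos_eq in Hy |- * by nra.
  apply (Rmult_lt_compat_l l) in Hy; [| exact Hl].
  replace (l * (eps / l)) with (pos eps) in Hy by (field; lra). exact Hy.
Qed.

Lemma radial_pd_truncated_cauchy alpha nu xi : 0 < alpha -> 0 < nu -> 0 < xi ->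
  radial_pd (fun h => lower_gamma (nu / 2) ((h ^ 2 + alpha) * xi) / Gamma_fun (nu / 2)
                      * Defs.cauchy h alpha nu).
Proof.
  intros Ha Hnu Hxi.
  set (A := nu / 2).
  assert (HA : 0 < A) by (unfold A; lra).
  assert (HG := Gamma_fun_pos A HA).
  apply (radial_pd_gauss_mixture xi
           (fun t => Rpower alpha A / Gamma_fun A * (Rpower t (A - 1) * exp (- alpha * t)))
           (fun t => t)); [exact Hxi | |].
  { intros t Ht. split; [| lra].
    apply Rmult_le_pos; [apply Rdiv_le_0_compat; [apply Rlt_le, exp_pos | exact HG] |].
    apply Rmult_le_pos; apply Rlt_le, exp_pos. }
  intros h Hh.
  set (l := h ^ 2 + alpha).
  assert (Hl : 0 < l) by (unfold l; pose proof (pow2_ge_0 h); lra).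
  assert (Hlx : 0 < l * xi) by (apply Rmult_lt_0_compat; assumption).
  assert (Hlower : lower_gamma A (l * xi) = ggamma_lower A 0 (l * xi)).
  { unfold lower_gamma, ggamma_lower.
    apply (RInt_gen_ext_eq (V := R_CompleteNormedModule));
      [intros t; unfold ggamma_integrand; now rewrite Rdiv_0_l, Rminus_0_r |].
    apply (ex_RInt_gen_ext_eq (V := R_NormedModule) (ggamma_integrand A 0));
      [intros t; unfold ggamma_integrand; now rewrite Rdiv_0_l, Rminus_0_r |].
    apply ex_RInt_gen_ggamma_at_right_0; [exact HA | apply Rle_refl | exact Hlx]. }
  assert (Hsubst : is_RInt_gen (fun t => l * ggamma_integrand A 0 (l * t)) (at_right 0) (at_point xi)
                     (ggamma_lower A 0 (l * xi))).
  { apply (is_RInt_gen_comp (Ga := at_right 0) (Gb := at_point (l * xi))).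
    - now apply filterlim_mult_at_right_0.
    - intros P HP. exact HP.
    - apply filter_prod_at_right_0_at_point_segment; [exact Hxi |]. intros t Ht. split; [| split].
      + apply ggamma_integrand_continuous, Rmult_lt_0_compat; assumption.
      + auto_derive; [easy | ring].
      + apply continuous_const.
    - apply is_RInt_gen_ggamma_lower; [exact HA | apply Rle_refl | exact Hlx]. }
  set (k := Rpower alpha A / (Gamma_fun A * Rpower l A)).
  assert (HlA : 0 < Rpower l A) by apply exp_pos.
  replace (lower_gamma A (l * xi) / Gamma_fun A * Defs.cauchy h alpha nu)
    with (k * ggamma_lower A 0 (l * xi)).
  2:{ rewrite Hlower. unfold k, Defs.cauchy.
      replace (1 + h ^ 2 / alpha) with (l / alpha) by (unfold l; field; lra).
      replace (- nu / 2) with (- A) by (unfold A; field).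
      unfold Rpower. unfold Rdiv at 3. rewrite ln_mult, ln_Rinv by (auto; apply Rinv_0_lt_compat; auto).
      replace (- A * (ln l + - ln alpha)) with (A * ln alpha + - (A * ln l)) by ring.
      rewrite exp_plus, exp_Ropp. field. split; [apply Rgt_not_eq, exp_pos | lra]. }
  pose proof (is_RInt_gen_scal (V := R_NormedModule) _ k _ Hsubst) as H.
  eapply is_RInt_gen_ext; [| exact H].
  apply filter_prod_at_right_0_at_point_open_segment; [exact Hxi |]. intros t Ht.
  change (scal ?x ?y) with (x * y). unfold k, ggamma_integrand, Rpower.
  rewrite ln_mult by assumption.
  replace (- (l * t) - 0 / (l * t)) with (- alpha * t + - t * h ^ 2)
    by (unfold Rdiv; rewrite Rmult_0_l; unfold l; ring).
  replace ((A - 1) * (ln l + ln t)) with (A * ln l + - ln l + (A - 1) * ln t) by ring.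
  rewrite !exp_plus, exp_Ropp, exp_ln by assumption.
  assert (0 < exp (A * ln l)) by apply exp_pos.
  match goal with |- ?x = ?y => change (@eq R x y) end.
  field. repeat split; lra.
Qed.

Theorem proposition1 (a1 n1 a2 n2 w1 w2 x1 x2 : R)
  (ha1 : 0 < a1) (hn1 : 0 < n1) (ha2 : 0 < a2) (hn2 : 0 < n2)
  (hw1 : 0 < w1) (hw2 : 0 < w2) (hx1 : 0 < x1) (hx2 : 0 < x2) :
  forall (d k : nat) (a : nat -> R) (s : nat -> nat -> R),
    0 <= fsum k (fun i => fsum k (fun j =>
           a i * a j * phiCM a1 n1 a2 n2 w1 w2 x1 x2 (eucl_dist d (s i) (s j)))).
Proof.
  change (radial_pd (phiCM a1 n1 a2 n2 w1 w2 x1 x2)).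
  apply (radial_pd_ext (fun h =>
    w1 * (lower_gamma (n1 / 2) ((h ^ 2 + a1) * x1) / Gamma_fun (n1 / 2) * Defs.cauchy h a1 n1)
    + w2 * (matern h a2 n2
            - / Gamma_fun n2 * gen_inc_gamma n2 (/ (4 * x2 * a2 ^ 2)) (h ^ 2 / (4 * a2 ^ 2))))).
  { intros h _. unfold phiCM. ring. }
  apply radial_pd_plus; apply radial_pd_scal; try lra.
  - now apply radial_pd_truncated_cauchy.
  - now apply radial_pd_truncated_matern.
Qed.
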